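(* For every integer $n\ge0$, $$\sum_{k=0}^{2n}\frac{(-1)^k}{\binom{2n}{k}^2}=(2n+1)\frac{(-1)^n}{\binom{2n}{n}}\left(\frac34\sum_{k=1}^n\frac{(-1)^k\binom{2k}{k}}{k}+\sum_{k=0}^n\frac{(-1)^k\binom{2k}{k}}{2k+1}\right).$$ *)

From mathcomp Require Import all_boot all_order all_algebra.

From mathcomp Require Import all_boot all_order all_algebra.
From mathcomp Require Import ring lra zify.
Import GRing.Theory Num.Theory.
Local Open Scope ring_scope.

(* Write  S(m) = \sum_(k <= m) (-1)^k / C(m,k)^2.  The proof is a
   Zeilberger-style recurrence argument:
   1. A rational certificate  G p j  (a polynomial in j over C(p+1,j)^2)
      telescopes the two-term combination
        2M(M-1)^2 (-1)^k/C(M,k)^2 + M^2(M+1)/2 (-1)^k/C(M-2,k)^2,  M = p+2,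
      so summing over k gives the second-order recurrence
        2M(M-1)^2 S(M) + M^2(M+1)/2 S(M-2) = (M-1)^2 (5M+3) (1 + (-1)^M)/2.
   2. The closed form  T(n)  of the statement satisfies the same recurrence
      along the even indices M = 2n+2, by the central-binomial ratio
      (n+1) C(2n+2,n+1) = 2 (2n+1) C(2n,n).
   3. S(0) = T(0) = 1, and the recurrence determines S(2n+2) from S(2n)
      since its leading coefficient is nonzero; induction concludes. *)

Section AlternatingInverseBinomialSquares.
Variable R : realFieldType.

(* Binomial ratios, used to express every binomial occurring in the
   certificate in terms of a single one, C(n,k). *)
Lemma binS_ratio (n k : nat) : (k <= n)%N ->
  ('C(n.+1, k)%:R : R) = n.+1%:R * 'C(n, k)%:R / (n.+1 - k)%:R.
Proof.
move=> le_kn; have nz : ((n.+1 - k)%:R : R) != 0 by rewrite pnatr_eq0; lia.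
apply: (mulIf nz); rewrite mulfVK // -!natrM mulnC.
by have /= -> := mul_bin_down n.+1 k.
Qed.

Lemma binSS_ratio (n k : nat) :
  ('C(n.+1, k.+1)%:R : R) = n.+1%:R * 'C(n, k)%:R / k.+1%:R.
Proof.
have nz : (k.+1%:R : R) != 0 by rewrite pnatr_eq0.
apply: (mulIf nz); rewrite mulfVK // -!natrM mulnC.
by have /= -> := mul_bin_diag n.+1 k.
Qed.

Definition alt_sum (m : nat) : R :=
  \sum_(0 <= k < m.+1) (-1) ^+ k / ('C(m, k)%:R) ^+ 2.

(* The telescoping certificate attached to M = p+2: a quadratic polynomial
   in j divided by C(p+1,j)^2, found by Gosper's algorithm. *)
Definition wz_cert (p j : nat) : R :=
  let M : R := p.+2%:R in
  (-1) ^+ j * M * (M - 1) ^+ 2 * (- (M * (5 * M + 3)) / 2 + (3 * M + 1) * j%:R - j%:R ^+ 2)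
  / (M ^+ 2 * ('C(p.+1, j)%:R) ^+ 2).

Lemma wz_cert_diff (p k : nat) : (k <= p)%N ->
  2 * p.+2%:R * (p.+2%:R - 1) ^+ 2 * ((-1) ^+ k / ('C(p.+2, k)%:R) ^+ 2)
  + p.+2%:R ^+ 2 * (p.+2%:R + 1) / 2 * ((-1) ^+ k / ('C(p, k)%:R) ^+ 2)
  = wz_cert p k.+1 - wz_cert p k.
Proof.
move=> le_kp.
have bin_nz : ('C(p, k)%:R : R) != 0 by rewrite pnatr_eq0 -lt0n bin_gt0.
have k_le_p : (k%:R : R) <= p%:R by rewrite ler_nat.
have k_ge0 : (0 : R) <= k%:R by rewrite ler0n.
rewrite /wz_cert (binS_ratio p.+1 k) ?(leqW le_kp) // binSS_ratio (binS_ratio p k) //.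
rewrite !natrB ?(leqW le_kp) ?(leqW (leqW le_kp)) // [(-1) ^+ k.+1]exprS.
field.
by rewrite bin_nz /=; apply/and5P; split; apply/eqP; lra.
Qed.

(* The second-order recurrence for S, obtained by summing the certificate
   identity over k <= p and adding the two top summands of S(p+2). *)
Lemma alt_sum_rec (p : nat) :
  2 * p.+2%:R * (p.+2%:R - 1) ^+ 2 * alt_sum p.+2
  + p.+2%:R ^+ 2 * (p.+2%:R + 1) / 2 * alt_sum p
  = (p.+2%:R - 1) ^+ 2 * (5 * p.+2%:R + 3) * (1 + (-1) ^+ p) / 2.
Proof.
set c1 : R := 2 * p.+2%:R * (p.+2%:R - 1) ^+ 2.
set c2 : R := p.+2%:R ^+ 2 * (p.+2%:R + 1) / 2.
set X := \sum_(0 <= k < p.+1) (-1) ^+ k / ('C(p.+2, k)%:R : R) ^+ 2.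
have telescoped : c1 * X + c2 * alt_sum p = wz_cert p p.+1 - wz_cert p 0.
  rewrite /X /alt_sum !mulr_sumr -big_split /=.
  by apply: telescope_sumr_eq => // k /andP[_ lt_kp]; rewrite wz_cert_diff.
rewrite {1}/alt_sum (big_nat_recr p.+2) // (big_nat_recr p.+1) //= -/X binSn binn.
have -> : c1 * (X + (-1) ^+ p.+1 / p.+2%:R ^+ 2 + (-1) ^+ p.+2 / 1 ^+ 2) + c2 * alt_sum p
    = (c1 * X + c2 * alt_sum p) + c1 * ((-1) ^+ p.+1 / p.+2%:R ^+ 2 + (-1) ^+ p.+2)
  by rewrite expr1n divr1; ring.
rewrite telescoped /wz_cert binn bin0 /c1 /c2 !exprS.
have p_ge0 : (0 : R) <= p%:R by rewrite ler0n.
by field; apply/eqP; lra.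
Qed.

Definition closed_form (n : nat) : R :=
  (2 * n + 1)%:R * ((-1) ^+ n / 'C(2 * n, n)%:R) *
  ((3 / 4) * \sum_(1 <= k < n.+1) (-1) ^+ k * 'C(2 * k, k)%:R / k%:R
   + \sum_(0 <= k < n.+1) (-1) ^+ k * 'C(2 * k, k)%:R / (2 * k + 1)%:R).

Lemma central_binom_succ (n : nat) :
  ('C(2 * n.+1, n.+1)%:R : R) = 2 * (2 * n).+1%:R * 'C(2 * n, n)%:R / n.+1%:R.
Proof.
have -> : (2 * n.+1 = (2 * n).+1.+1)%N by lia.
rewrite binSS_ratio binS_ratio; last by lia.
have -> : ((2 * n).+1 - n = n.+1)%N by lia.
have -> : ((2 * n).+2%:R : R) = 2 * n.+1%:R by rewrite -natrM; congr _%:R; lia.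
by field; rewrite nat1r pnatr_eq0.
Qed.

Lemma closed_form_rec (n : nat) :
  let M : R := (2 * n).+2%:R in
  2 * M * (M - 1) ^+ 2 * closed_form n.+1 + M ^+ 2 * (M + 1) / 2 * closed_form n
  = (M - 1) ^+ 2 * (5 * M + 3).
Proof.
rewrite /closed_form !(big_nat_recr n.+1) // central_binom_succ.
have bin_nz : ('C(2 * n, n)%:R : R) != 0 by rewrite pnatr_eq0 -lt0n bin_gt0; lia.
have n_ge0 : (0 : R) <= n%:R by rewrite ler0n.
have odd_cast : ((2 * n).+1%:R : R) = 2 * n%:R + 1 by rewrite -natr1 natrM.
have odd_cast' : ((2 * n + 1)%:R : R) = 2 * n%:R + 1 by rewrite natrD natrM.
have next_odd_cast : ((2 * n.+1 + 1)%:R : R) = 2 * n%:R + 3 by rewrite natrD natrM -natr1; ring.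
have even_cast : ((2 * n).+2%:R : R) = 2 * n%:R + 2 by rewrite -!natr1 natrM; ring.
rewrite odd_cast odd_cast' next_odd_cast even_cast -[n.+1%:R]natr1 [(-1 : R) ^+ n.+1]exprS /=.
rewrite -[(-1 : R) ^+ n]signr_odd.
by case: (odd n) => /=; field; rewrite bin_nz /=; apply/and3P; split; apply/eqP; lra.
Qed.

Lemma alt_sum_even (n : nat) : alt_sum (2 * n) = closed_form n.
Proof.
elim: n => [|n IH]; first by rewrite /alt_sum /closed_form muln0 !big_nat1 big_geq // !bin0; field.
have -> : (2 * n.+1 = (2 * n).+2)%N by lia.
set M : R := (2 * n).+2%:R.
(* Both sides solve  c1 x + c2 S(2n) = r  with  c1 = 2M(M-1)^2 <> 0. *)
have lead_nz : 2 * M * (M - 1) ^+ 2 != 0.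
  by rewrite /M -[X in X - 1]natr1 addrK !mulf_neq0 ?expf_neq0 ?pnatr_eq0.
apply: (mulfI lead_nz); apply: (addIr (M ^+ 2 * (M + 1) / 2 * alt_sum (2 * n))).
rewrite alt_sum_rec IH closed_form_rec.
by rewrite exprM sqrrN !expr1n; field.
Qed.

End AlternatingInverseBinomialSquares.

Theorem mainTheorem10 (n : nat) :
  \sum_(0 <= k < (2 * n).+1) (-1 : rat) ^+ k / ('C(2 * n, k)%:R) ^+ 2 =
  (2 * n + 1)%:R * ((-1) ^+ n / 'C(2 * n, n)%:R) *
  ((3 / 4) * \sum_(1 <= k < n.+1) (-1) ^+ k * 'C(2 * k, k)%:R / k%:R
   + \sum_(0 <= k < n.+1) (-1) ^+ k * 'C(2 * k, k)%:R / (2 * k + 1)%:R).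
Proof. exact: (alt_sum_even rat n). Qed.
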